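(* Let $L_B$ be the weighted Laplacian of a connected undirected graph on $N$ nodes with positive edge weights, with eigenvalues $0=\lambda_1^B<\lambda_2^B\le\cdots\le\lambda_N^B$. Let $k_P,\tau_P,k_Q,\tau_Q>0$, $\bar b\ge 0$, $c_Q=1+2k_Q\bar b$, and $\alpha>0$. Consider the linear time-invariant system $H$ with state $\psi=(\delta,\omega,V)\in\mathbb{R}^{3N}$, input $\mathrm{w}\in\mathbb{R}^{2N}$ and output $y\in\mathbb{R}^{2N}$: $$\dot\psi=\begin{bmatrix}0 & I & 0\\ -\frac{k_P}{\tau_P}L_B & -\frac{1}{\tau_P}I & 0\\ 0 & 0 & -\frac{c_Q}{\tau_Q}I-\frac{k_Q}{\tau_Q}L_B\end{bmatrix}\psi+\begin{bmatrix}0&0\\ \frac{1}{\tau_P}I & 0\\ 0 & \frac{1}{\tau_Q}I\end{bmatrix}\mathrm{w},\qquad y=\begin{bmatrix}\sqrt{\alpha}L_B^{1/2} & 0 & 0\\ 0&0&\sqrt{\alpha}L_B^{1/2}\end{bmatrix}\psi .$$ Then the squared $\mathcal{H}_2$ norm of $H$ is $$\|H\|_2^2=\frac{\alpha}{2k_P}(N-1)+\frac{\alpha}{2\tau_Q}\sum_{n=2}^N\frac{1}{\frac{c_Q}{\lambda_n^B}+k_Q}.$$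
   Context: $I$ is the $N\times N$ identity and $L_B^{1/2}$ is the unique positive semidefinite square root of $L_B$. The system matrix has a single zero eigenvalue (mode $\delta\propto\mathbf{1}$), which is unobservable from $y$; all other modes are stable, so the $\mathcal{H}_2$ norm of the transfer function $C(sI-A)^{-1}B$ is finite; $\|H\|_2^2$ equals the steady-state output variance $\lim_{t\to\infty}\mathbb{E}[y^*(t)y(t)]$ under unit-covariance white noise input. Interpretation: $y^*y=\delta^TL_G\delta+V^TL_GV$ with $L_G=\alpha L_B$ the conductance Laplacian (uniform resistance-to-reactance ratio $\alpha$), approximating instantaneous transient power losses. *)

(* real matrices represented as functions nat -> nat -> R with
   explicit dimensions (only entries with indices below the dimension matter). *)
From Stdlib Require Export Reals Arith.
Open Scope R_scope.

Definition Mat := nat -> nat -> R.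

Fixpoint rsum (n : nat) (f : nat -> R) : R :=
  match n with O => 0 | S m => rsum m f + f m end.

Definition idm : Mat := fun i j => if Nat.eqb i j then 1 else 0.

Definition mmul (n : nat) (A B : Mat) : Mat :=
  fun i j => rsum n (fun k => A i k * B k j).

Fixpoint mpow (n : nat) (A : Mat) (k : nat) : Mat :=
  match k with O => idm | S k' => mmul n A (mpow n A k') end.

Definition is_expm (n : nat) (A : Mat) (Phi : R -> Mat) : Prop :=
  forall t i j, (i < n)%nat -> (j < n)%nat ->
    infinite_sum (fun k => mpow n A k i j * t ^ k / INR (fact k)) (Phi t i j).

Definition improper_int0 (f : R -> R) (l : R) : Prop :=
  exists pr : (forall T, Riemann_integrable f 0 T),
    forall eps, eps > 0 -> exists M, forall T, T >= M ->
      Rabs (RiemannInt (pr T) - l) < eps.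

(* Squared H2 norm of (A,B,C) (state dim n, input dim m, output dim p):
   integral over [0,oo) of the squared Frobenius norm of the impulse
   response C exp(A t) B. *)
Definition H2_norm_sq (n m p : nat) (A B C : Mat) (v : R) : Prop :=
  forall Phi, is_expm n A Phi ->
    improper_int0
      (fun t => rsum p (fun i => rsum m (fun j =>
         (mmul n (mmul n C (Phi t)) B i j) ^ 2))) v.

(* Weighted undirected graph on nodes 0..N-1; w i j >= 0 symmetric,
   an edge is present iff w i j > 0. *)
Inductive reach (N : nat) (w : Mat) : nat -> nat -> Prop :=
| reach_refl i : reach N w i i
| reach_step i k j : (k < N)%nat -> w i k > 0 -> reach N w k j -> reach N w i j.

Definition connected (N : nat) (w : Mat) : Prop :=
  forall i j, (i < N)%nat -> (j < N)%nat -> reach N w i j.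

Definition laplacian (N : nat) (w : Mat) : Mat :=
  fun i j => if Nat.eqb i j
             then rsum N (fun k => if Nat.eqb k i then 0 else w i k)
             else - w i j.

Definition is_psd_sqrt (N : nat) (L S : Mat) : Prop :=
  (forall i j, (i < N)%nat -> (j < N)%nat -> S i j = S j i) /\
  (forall x : nat -> R, 0 <= rsum N (fun i => rsum N (fun j => x i * S i j * x j))) /\
  (forall i j, (i < N)%nat -> (j < N)%nat -> mmul N S S i j = L i j).

(* lam 0 <= ... <= lam (N-1) are the eigenvalues of the symmetric L, with
   multiplicity: columns of U form an orthonormal eigenbasis. *)
Definition eigen_decomp (N : nat) (L U : Mat) (lam : nat -> R) : Prop :=
  (forall i j, (i < N)%nat -> (j < N)%nat ->
     rsum N (fun k => U k i * U k j) = idm i j) /\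
  (forall i n, (i < N)%nat -> (n < N)%nat ->
     rsum N (fun k => L i k * U k n) = lam n * U i n).

(* Block system of the paper, with state (delta, omega, V) indexed by
   0..N-1, N..2N-1, 2N..3N-1, and input/output blocks 0..N-1, N..2N-1. *)
Definition sysA (N : nat) (L : Mat) (kP tauP kQ tauQ cQ : R) : Mat :=
  fun i j =>
    let oi := (i mod N)%nat in let oj := (j mod N)%nat in
    match (i / N)%nat, (j / N)%nat with
    | 0%nat, 1%nat => idm oi oj
    | 1%nat, 0%nat => - (kP / tauP) * L oi oj
    | 1%nat, 1%nat => - (1 / tauP) * idm oi oj
    | 2%nat, 2%nat => - (cQ / tauQ) * idm oi oj - (kQ / tauQ) * L oi oj
    | _, _ => 0
    end.

Definition sysB (N : nat) (tauP tauQ : R) : Mat :=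
  fun i j =>
    let oi := (i mod N)%nat in let oj := (j mod N)%nat in
    match (i / N)%nat, (j / N)%nat with
    | 1%nat, 0%nat => (1 / tauP) * idm oi oj
    | 2%nat, 1%nat => (1 / tauQ) * idm oi oj
    | _, _ => 0
    end.

Definition sysC (N : nat) (S : Mat) (alpha : R) : Mat :=
  fun i j =>
    let oi := (i mod N)%nat in let oj := (j mod N)%nat in
    match (i / N)%nat, (j / N)%nat with
    | 0%nat, 0%nat => sqrt alpha * S oi oj
    | 1%nat, 2%nat => sqrt alpha * S oi oj
    | _, _ => 0
    end.

(* In the orthonormal eigenbasis [U] of [L_B], every column [e^{At} B e_j] of the
   impulse response splits into scalar modes: for each eigenvalue [λ_n] a damped
   oscillator [d' = w, w' = - (kP/tauP) λ_n d - w/tauP] (angle and frequency) and a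
   decaying exponential [v' = - (cQ + kQ λ_n)/tauQ v] (voltage), and since [S^2 = L_B]
   the integrand becomes [Σ_j Σ_n α λ_n (d^2 + v^2)].  For each mode the solution of
   its Lyapunov equation is a quadratic cost to go [G] with [G' = - α λ_n d^2]
   (resp. [- α λ_n v^2]) which decays exponentially, so the integral over [0, oo) is
   the value of [Σ G] at [t = 0], read off from the initial state [B e_j].  The mode
   [λ_0 = 0], which does not decay, has weight [0]. *)

From Stdlib Require Import Reals Lra Lia FunctionalExtensionality.
From Coquelicot Require Import Coquelicot.
Open Scope R_scope.

Lemma rsum_ext n f g : (forall i, (i < n)%nat -> f i = g i) -> rsum n f = rsum n g.
Proof.
  induction n as [|n IH]; intros H; simpl; [reflexivity|].
  rewrite IH by (intros; apply H; lia). rewrite H by lia. reflexivity.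
Qed.

Lemma rsum_eq0 n f : (forall i, (i < n)%nat -> f i = 0) -> rsum n f = 0.
Proof.
  induction n as [|n IH]; intros H; simpl; [reflexivity|].
  rewrite IH by (intros; apply H; lia). rewrite H by lia. ring.
Qed.

Lemma rsum_0 n : rsum n (fun _ => 0) = 0.
Proof. now apply rsum_eq0. Qed.

Lemma rsum_plus n f g : rsum n (fun i => f i + g i) = rsum n f + rsum n g.
Proof. induction n as [|n IH]; simpl; [ring|]. rewrite IH. ring. Qed.

Lemma rsum_opp n f : rsum n (fun i => - f i) = - rsum n f.
Proof. induction n as [|n IH]; simpl; [ring|]. rewrite IH. ring. Qed.

Lemma rsum_scal_l n c f : rsum n (fun i => c * f i) = c * rsum n f.
Proof. induction n as [|n IH]; simpl; [ring|]. rewrite IH. ring. Qed.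

Lemma rsum_scal_r n c f : rsum n (fun i => f i * c) = rsum n f * c.
Proof. induction n as [|n IH]; simpl; [ring|]. rewrite IH. ring. Qed.

Lemma rsum_comm n m (f : nat -> nat -> R) :
  rsum n (fun i => rsum m (fun j => f i j)) = rsum m (fun j => rsum n (fun i => f i j)).
Proof.
  induction n as [|n IH]; simpl.
  - now rewrite rsum_0.
  - rewrite IH, <- rsum_plus. reflexivity.
Qed.

Lemma rsum_split m n f : rsum (m + n) f = rsum m f + rsum n (fun i => f (m + i)%nat).
Proof.
  induction n as [|n IH]; simpl.
  - rewrite Nat.add_0_r. ring.
  - rewrite Nat.add_succ_r. simpl. rewrite IH. ring.
Qed.

Lemma rsum_idm_l n i f : (i < n)%nat -> rsum n (fun k => idm i k * f k) = f i.
Proof.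
  induction n as [|n IH]; intros Hi; [lia|]. simpl. unfold idm at 2.
  destruct (Nat.eqb_spec i n) as [->|Hne].
  - rewrite rsum_eq0; [ring|]. intros k Hk. unfold idm.
    replace (Nat.eqb n k) with false by (symmetry; apply Nat.eqb_neq; lia). ring.
  - rewrite IH by lia. ring.
Qed.

Lemma rsum_idm_r n i f : (i < n)%nat -> rsum n (fun k => f k * idm k i) = f i.
Proof.
  intros Hi. rewrite <- (rsum_idm_l n i f Hi). apply rsum_ext. intros k _.
  unfold idm. rewrite Nat.eqb_sym. ring.
Qed.

Lemma rsum_sqr n f : rsum n f ^ 2 = rsum n (fun l => rsum n (fun m => f l * f m)).
Proof.
  replace (rsum n f ^ 2) with (rsum n f * rsum n f) by ring.
  rewrite <- rsum_scal_r. apply rsum_ext. intros. apply eq_sym, rsum_scal_l.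
Qed.

Lemma rsum_le n f g : (forall i, (i < n)%nat -> f i <= g i) -> rsum n f <= rsum n g.
Proof.
  induction n as [|n IH]; intros H; simpl; [lra|].
  apply Rplus_le_compat; [apply IH; intros; apply H|apply H]; lia.
Qed.

Lemma rsum_nonneg n f : (forall i, (i < n)%nat -> 0 <= f i) -> 0 <= rsum n f.
Proof. intros H. rewrite <- (rsum_0 n). now apply rsum_le. Qed.

Lemma rsum_abs n f : Rabs (rsum n f) <= rsum n (fun i => Rabs (f i)).
Proof.
  induction n as [|n IH]; simpl; [rewrite Rabs_R0; lra|].
  eapply Rle_trans; [apply Rabs_triang|lra].
Qed.

Lemma rsum_term_le n f i :
  (forall k, (k < n)%nat -> 0 <= f k) -> (i < n)%nat -> f i <= rsum n f.
Proof.
  induction n as [|n IH]; intros H Hi; [lia|]. simpl.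
  destruct (Nat.eq_dec i n) as [->|Hne].
  - pose proof (rsum_nonneg n f ltac:(intros; apply H; lia)). lra.
  - pose proof (IH ltac:(intros; apply H; lia) ltac:(lia)). pose proof (H n ltac:(lia)). lra.
Qed.

Lemma rsum_nonneg_eq0 n f :
  (forall i, (i < n)%nat -> 0 <= f i) -> rsum n f = 0 -> forall i, (i < n)%nat -> f i = 0.
Proof.
  intros Hpos Hsum i Hi. apply Rle_antisym; [|now apply Hpos].
  rewrite <- Hsum. now apply rsum_term_le.
Qed.

Lemma rsum_const_skip0 n c : rsum n (fun i => if Nat.eqb i 0 then 0 else c) = c * INR (n - 1).
Proof.
  induction n as [|n IH]; [simpl; ring|]. cbn [rsum]. rewrite IH.
  destruct n as [|n]; [simpl; ring|].
  replace (S (S n) - 1)%nat with (S (S n - 1)) by lia. rewrite S_INR. simpl. ring.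
Qed.

Lemma idm_sym i j : idm i j = idm j i.
Proof. unfold idm. now rewrite Nat.eqb_sym. Qed.

Lemma mmul_assoc n A B C i j : mmul n (mmul n A B) C i j = mmul n A (mmul n B C) i j.
Proof.
  unfold mmul.
  rewrite (rsum_ext n _ (fun m => rsum n (fun k => A i k * B k m * C m j)))
    by (intros; apply eq_sym, rsum_scal_r).
  rewrite rsum_comm. apply rsum_ext. intros k _. rewrite <- rsum_scal_l.
  apply rsum_ext. intros; ring.
Qed.

(* [M = I - U U^T] satisfies [M^T M = M] and has trace [0], while the trace of
   [M^T M] is the sum of the squares of the entries of [M]. *)
Lemma orthonormal_cols_rows N (U : Mat) :
  (forall i j, (i < N)%nat -> (j < N)%nat -> rsum N (fun k => U k i * U k j) = idm i j) ->
  forall i j, (i < N)%nat -> (j < N)%nat -> rsum N (fun k => U i k * U j k) = idm i j.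
Proof.
  intros Hcols.
  set (P i j := rsum N (fun k => U i k * U j k)).
  set (M i j := idm i j - P i j).
  assert (HPP : forall i j, (i < N)%nat -> (j < N)%nat -> rsum N (fun k => P k i * P k j) = P i j).
  { intros i j Hi Hj. unfold P.
    rewrite (rsum_ext N _ (fun k => rsum N (fun a => rsum N (fun b =>
               U i a * U j b * (U k a * U k b))))).
    2:{ intros k _. rewrite <- rsum_scal_r. apply rsum_ext. intros a _.
        rewrite <- rsum_scal_l. apply rsum_ext. intros; ring. }
    rewrite rsum_comm. apply rsum_ext. intros a Ha. rewrite rsum_comm.
    rewrite (rsum_ext N _ (fun b => U i a * U j b * idm a b)).
    2:{ intros b Hb. rewrite rsum_scal_l, Hcols by assumption. reflexivity. }
    rewrite (rsum_ext N _ (fun b => U i a * U j b * idm b a)) by (intros; now rewrite idm_sym).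
    now rewrite rsum_idm_r. }
  assert (HMM : forall i j, (i < N)%nat -> (j < N)%nat -> rsum N (fun k => M k i * M k j) = M i j).
  { intros i j Hi Hj. unfold M.
    rewrite (rsum_ext N _ (fun k => idm i k * idm k j - idm i k * P k j - P k i * idm k j
                                    + P k i * P k j))
      by (intros k _; rewrite (idm_sym k i); ring).
    unfold Rminus. rewrite !rsum_plus, !rsum_opp.
    rewrite rsum_idm_l, rsum_idm_l, rsum_idm_r, HPP by assumption.
    replace (P j i) with (P i j) by (unfold P; apply rsum_ext; intros; ring).
    ring. }
  assert (Htrace : rsum N (fun i => M i i) = 0).
  { unfold M, Rminus. rewrite rsum_plus, rsum_opp. unfold P.
    rewrite (rsum_comm N N (fun i k => U i k * U i k)).
    rewrite (rsum_ext N (fun k => rsum N (fun i => U i k * U i k)) (fun k => idm k k))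
      by (intros; now apply Hcols).
    ring. }
  assert (Hcol : forall j, (j < N)%nat -> rsum N (fun k => M k j * M k j) = 0).
  { apply rsum_nonneg_eq0.
    - intros; apply rsum_nonneg; intros; apply Rle_0_sqr.
    - rewrite <- Htrace. apply rsum_ext. intros; now apply HMM. }
  intros i j Hi Hj.
  assert (HMij : M i j = 0).
  { apply Rsqr_0_uniq,
      (rsum_nonneg_eq0 N (fun k => M k j * M k j) (fun _ _ => Rle_0_sqr _) (Hcol j Hj) i Hi). }
  unfold M in HMij. fold (P i j). lra.
Qed.

Lemma is_derive_eq (f : R -> R) (t a b : R) : a = b -> is_derive f t a -> is_derive f t b.
Proof. now intros ->. Qed.

Lemma is_derive_Rconst (c t : R) : is_derive (fun _ => c) t 0.
Proof. apply (is_derive_const c t). Qed.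

Lemma is_derive_Rplus (f g : R -> R) (t a b : R) :
  is_derive f t a -> is_derive g t b -> is_derive (fun x => f x + g x) t (a + b).
Proof. apply (is_derive_plus f g t a b). Qed.

Lemma is_derive_Rmult (f g : R -> R) (t a b : R) : is_derive f t a -> is_derive g t b ->
  is_derive (fun x => f x * g x) t (a * g t + f t * b).
Proof. intros. apply (is_derive_mult f g t a b); auto. intros; apply Rmult_comm. Qed.

Lemma is_derive_sqr (f : R -> R) (t a : R) :
  is_derive f t a -> is_derive (fun x => f x ^ 2) t (2 * f t * a).
Proof.
  intros H. apply (is_derive_ext (fun x => f x * f x)); [intros; simpl; ring|].
  replace (2 * f t * a) with (a * f t + f t * a) by ring. now apply is_derive_Rmult.
Qed.

Lemma is_derive_rsum m (F : nat -> R -> R) (dF : nat -> R) (t : R) :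
  (forall k, (k < m)%nat -> is_derive (F k) t (dF k)) ->
  is_derive (fun x => rsum m (fun k => F k x)) t (rsum m dF).
Proof.
  induction m as [|m IH]; intros H; simpl.
  - apply is_derive_Rconst.
  - apply is_derive_Rplus; [apply IH; intros|]; apply H; lia.
Qed.

Lemma is_derive_continuous_R (f : R -> R) (t a : R) : is_derive f t a -> continuous f t.
Proof.
  intros H. apply (ex_derive_continuous (K := R_AbsRing) (V := R_NormedModule)). now exists a.
Qed.

Definition vanishes_at_infty (f : R -> R) :=
  forall eps, eps > 0 -> exists M, forall T, T >= M -> Rabs (f T) < eps.

Lemma vanishes_at_infty_plus f g :
  vanishes_at_infty f -> vanishes_at_infty g -> vanishes_at_infty (fun t => f t + g t).
Proof.
  intros Hf Hg eps He.
  destruct (Hf (eps / 2)) as [M1 H1]; [lra|]. destruct (Hg (eps / 2)) as [M2 H2]; [lra|].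
  exists (Rmax M1 M2). intros T HT.
  specialize (H1 T ltac:(pose proof (Rmax_l M1 M2); lra)).
  specialize (H2 T ltac:(pose proof (Rmax_r M1 M2); lra)).
  pose proof (Rabs_triang (f T) (g T)). lra.
Qed.

Lemma vanishes_at_infty_rsum m (F : nat -> R -> R) :
  (forall k, (k < m)%nat -> vanishes_at_infty (F k)) ->
  vanishes_at_infty (fun t => rsum m (fun k => F k t)).
Proof.
  induction m as [|m IH]; intros H; simpl.
  - intros eps He. exists 0. intros. rewrite Rabs_R0. lra.
  - apply (vanishes_at_infty_plus (fun t => rsum m (fun k => F k t)) (F m));
      [apply IH; intros|]; apply H; lia.
Qed.

Lemma vanishes_at_infty_dominated f g K : 0 <= K ->
  (forall t, t >= 0 -> Rabs (g t) <= K * Rabs (f t)) ->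
  vanishes_at_infty f -> vanishes_at_infty g.
Proof.
  intros HK Hb Hf eps He.
  destruct (Hf (eps / (K + 1))) as [M HM]; [apply Rdiv_lt_0_compat; lra|].
  exists (Rmax M 0). intros T HT.
  specialize (HM T ltac:(pose proof (Rmax_l M 0); lra)).
  specialize (Hb T ltac:(pose proof (Rmax_r M 0); lra)).
  assert (Hlt : K * (eps / (K + 1)) < eps).
  { apply (Rmult_lt_reg_r (K + 1)); [lra|].
    replace (K * (eps / (K + 1)) * (K + 1)) with (K * eps) by (field; lra). nra. }
  pose proof (Rmult_le_compat_l K _ _ HK (Rlt_le _ _ HM)). lra.
Qed.

Lemma vanishes_at_infty_exp C e : e > 0 -> vanishes_at_infty (fun t => C * exp (- e * t)).
Proof.
  intros He eps Heps.
  set (r := eps / (Rabs C + 1)).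
  assert (HC := Rabs_pos C).
  assert (Hr : r > 0) by (apply Rdiv_lt_0_compat; lra).
  exists (Rabs (ln r) / e). intros T HT.
  rewrite Rabs_mult, (Rabs_right (exp _)) by (left; apply exp_pos).
  assert (Hexp : exp (- e * T) <= r).
  { rewrite <- (exp_ln r Hr).
    assert (Hle : - e * T <= ln r).
    { assert (e * T >= Rabs (ln r)).
      { apply Rle_ge, (Rmult_le_reg_r (/ e)); [now apply Rinv_0_lt_compat|].
        replace (e * T * / e) with T by (field; lra). unfold Rdiv in HT. lra. }
      pose proof (Rle_abs (- ln r)). rewrite Rabs_Ropp in *. lra. }
    destruct Hle as [Hlt|Heq]; [left; now apply exp_increasing|right; now rewrite Heq]. }
  assert (Rabs C * r < eps).
  { apply (Rmult_lt_reg_r (Rabs C + 1)); [lra|]. unfold r.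
    replace (Rabs C * (eps / (Rabs C + 1)) * (Rabs C + 1)) with (Rabs C * eps) by (field; lra).
    nra. }
  pose proof (Rmult_le_compat_l (Rabs C) _ _ HC Hexp). lra.
Qed.

(* [W t * exp (e t)] is nonincreasing. *)
Lemma decay_of_derive_le (W dW : R -> R) e :
  (forall t, is_derive W t (dW t)) -> (forall t, dW t <= - e * W t) ->
  forall t, t >= 0 -> W t <= W 0 * exp (- e * t).
Proof.
  intros HD Hle t Ht.
  set (h s := W s * exp (e * s)).
  set (dh s := dW s * exp (e * s) + W s * (e * exp (e * s))).
  assert (Hh : forall s, is_derive h s (dh s)).
  { intros s. apply (is_derive_Rmult W (fun s => exp (e * s))); [apply HD|].
    auto_derive; [easy|ring]. }
  assert (Hmono : h t <= h 0).
  { destruct (Req_dec t 0) as [->|Hne]; [lra|].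
    destruct (MVT_gen h 0 t dh) as [c [Hc Heq]].
    - intros; apply Hh.
    - intros. apply continuity_pt_filterlim, (is_derive_continuous_R h x _ (Hh x)).
    - assert (dh c <= 0).
      { unfold dh. pose proof (Hle c). pose proof (exp_pos (e * c)). nra. }
      rewrite Rmin_left, Rmax_right in Hc by lra. nra. }
  unfold h in Hmono. rewrite Rmult_0_r, exp_0, Rmult_1_r in Hmono.
  replace (W t) with (W t * exp (e * t) * exp (- e * t))
    by (rewrite Rmult_assoc, <- exp_plus; replace (e * t + - e * t) with 0 by ring;
        rewrite exp_0; ring).
  apply Rmult_le_compat_r; [left; apply exp_pos|exact Hmono].
Qed.

Lemma vanishes_at_infty_lyapunov (V W dW : R -> R) e c1 c2 :
  0 < e -> 0 < c1 -> 0 < c2 -> (forall t, 0 <= V t) ->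
  (forall t, c1 * V t <= W t <= c2 * V t) ->
  (forall t, is_derive W t (dW t)) -> (forall t, dW t <= - e * V t) ->
  vanishes_at_infty V.
Proof.
  intros He Hc1 Hc2 HV HW HD Hle.
  assert (Hdec : forall t, t >= 0 -> W t <= W 0 * exp (- (e / c2) * t)).
  { apply (decay_of_derive_le W dW); [exact HD|]. intros t.
    specialize (Hle t). destruct (HW t) as [_ Hup].
    enough (e / c2 * W t <= e * V t) by lra.
    unfold Rdiv. rewrite Rmult_assoc. apply Rmult_le_compat_l; [lra|].
    apply (Rmult_le_reg_l c2); [lra|]. field_simplify; lra. }
  apply (vanishes_at_infty_dominated (fun t => W 0 * exp (- (e / c2) * t)) V (/ c1)).
  - left. now apply Rinv_0_lt_compat.
  - intros t Ht. specialize (Hdec t Ht). destruct (HW t) as [Hlow _].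
    rewrite (Rabs_right (V t)) by (apply Rle_ge, HV).
    apply (Rmult_le_reg_l c1); [lra|]. field_simplify; [|lra].
    pose proof (Rle_abs (W 0 * exp (- (e / c2) * t))). lra.
  - apply vanishes_at_infty_exp. apply Rdiv_lt_0_compat; lra.
Qed.

Lemma improper_int0_primitive (f G : R -> R) :
  (forall t, is_derive G t (- f t)) -> (forall t, continuous f t) ->
  vanishes_at_infty G -> improper_int0 f (G 0).
Proof.
  intros HD HC HG.
  assert (pr : forall T, Riemann_integrable f 0 T).
  { intros T. apply ex_RInt_Reals_0, (ex_RInt_continuous (V := R_CompleteNormedModule)).
    intros; apply HC. }
  exists pr. intros eps He. destruct (HG eps He) as [M HM]. exists M. intros T HT.
  rewrite <- RInt_Reals.
  assert (Hi : is_RInt f 0 T (minus (- G T) (- G 0))).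
  { apply (is_RInt_derive (fun t => - G t) f); [|intros; apply HC].
    intros x _. eapply is_derive_eq; [|apply (is_derive_opp G x _ (HD x))].
    unfold opp; simpl. ring. }
  rewrite (is_RInt_unique _ _ _ _ Hi). unfold minus, plus, opp; simpl.
  replace (- G T + - - G 0 - G 0) with (- G T) by ring. rewrite Rabs_Ropp. auto.
Qed.

(** * The matrix exponential *)

Lemma pow_div_fact_le_exp y k : 0 <= y -> y ^ k / INR (fact k) <= exp y.
Proof.
  intros Hy.
  set (a i := / INR (fact i) * y ^ i).
  assert (Ha : forall i, 0 <= a i).
  { intros i. apply Rmult_le_pos; [left; apply Rinv_0_lt_compat, INR_fact_lt_0|now apply pow_le]. }
  assert (Hk : a k <= sum_f_R0 a k).
  { destruct k as [|k]; [simpl; lra|]. rewrite tech5. pose proof (cond_pos_sum a k Ha). lra. }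
  assert (Hsum : sum_f_R0 a k <= exp y) by (apply sum_incr; [exact (proj2_sig (exist_exp y))|auto]).
  unfold Rdiv. rewrite Rmult_comm. change (a k <= exp y). lra.
Qed.

Definition mx_growth (n : nat) (A : Mat) : R :=
  rsum n (fun i => rsum n (fun j => Rabs (A i j))) + 1.

Lemma mx_growth_ge1 n A : 1 <= mx_growth n A.
Proof.
  unfold mx_growth.
  pose proof (rsum_nonneg n (fun i => rsum n (fun j => Rabs (A i j)))
                (fun i _ => rsum_nonneg n _ (fun j _ => Rabs_pos (A i j)))). lra.
Qed.

Lemma mx_growth_row n A i : (i < n)%nat -> rsum n (fun j => Rabs (A i j)) <= mx_growth n A.
Proof.
  intros Hi. unfold mx_growth.
  pose proof (rsum_term_le n (fun i => rsum n (fun j => Rabs (A i j))) i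
                (fun i _ => rsum_nonneg n _ (fun j _ => Rabs_pos (A i j))) Hi). lra.
Qed.

Lemma mpow_entry_le n A k i j : (i < n)%nat -> (j < n)%nat ->
  Rabs (mpow n A k i j) <= mx_growth n A ^ k.
Proof.
  revert i j. induction k as [|k IH]; intros i j Hi Hj; simpl.
  - unfold idm. destruct (Nat.eqb i j); [rewrite Rabs_R1|rewrite Rabs_R0]; lra.
  - unfold mmul. eapply Rle_trans; [apply rsum_abs|].
    eapply Rle_trans; [apply (rsum_le _ _ (fun l => Rabs (A i l) * mx_growth n A ^ k))|].
    + intros l Hl. rewrite Rabs_mult. apply Rmult_le_compat_l; [apply Rabs_pos|auto].
    + rewrite rsum_scal_r. apply Rmult_le_compat_r; [|now apply mx_growth_row].
      apply pow_le. pose proof (mx_growth_ge1 n A). lra.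
Qed.

Definition expm_coef (n : nat) (A : Mat) (i j k : nat) : R := mpow n A k i j / INR (fact k).

Lemma expm_coef_radius n A i j x : (i < n)%nat -> (j < n)%nat ->
  Rbar_lt (Rabs x) (CV_radius (expm_coef n A i j)).
Proof.
  intros Hi Hj.
  set (c := mx_growth n A). set (r := Rabs x + 1).
  assert (Hr : 0 <= r) by (pose proof (Rabs_pos x); unfold r; lra).
  assert (Hc : 1 <= c) by apply mx_growth_ge1.
  assert (Hbound : forall k, Rabs (expm_coef n A i j k * r ^ k) <= exp (c * r)).
  { intros k. unfold expm_coef, Rdiv.
    rewrite !Rabs_mult, (Rabs_right (/ INR (fact k))), (Rabs_right (r ^ k)).
    2: apply Rle_ge, pow_le, Hr.
    2: apply Rle_ge; left; apply Rinv_0_lt_compat, INR_fact_lt_0.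
    eapply Rle_trans; [|apply (pow_div_fact_le_exp (c * r) k); apply Rmult_le_pos; lra].
    rewrite Rpow_mult_distr. unfold Rdiv.
    pose proof (mpow_entry_le n A k i j Hi Hj) as Hk. fold c in Hk.
    pose proof (pow_le r k Hr). pose proof (Rinv_0_lt_compat _ (INR_fact_lt_0 k)).
    assert (Rabs (mpow n A k i j) * r ^ k <= c ^ k * r ^ k) by (apply Rmult_le_compat_r; lra).
    nra. }
  destruct (CV_radius_bounded (expm_coef n A i j)) as [Hub _].
  eapply Rbar_lt_le_trans; [|exact (Hub r (ex_intro _ _ Hbound))]. simpl. unfold r. lra.
Qed.

Lemma is_pseries_rsum m (b : nat -> nat -> R) (x : R) (s : nat -> R) :
  (forall l, (l < m)%nat -> @is_pseries R_AbsRing R_NormedModule (b l) x (s l)) ->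
  @is_pseries R_AbsRing R_NormedModule (fun k => rsum m (fun l => b l k)) x (rsum m s).
Proof.
  induction m as [|m IH]; intros H; simpl.
  - assert (H0 : ex_pseries (fun _ : nat => 0) x).
    { apply CV_radius_inside. rewrite CV_radius_const_0. simpl; auto. }
    pose proof (PSeries_correct _ x H0) as H1. now rewrite PSeries_const_0 in H1.
  - exact (is_pseries_plus _ _ x _ _ (IH ltac:(intros; apply H; lia)) (H m ltac:(lia))).
Qed.

Section MatrixExponential.
Variables (n : nat) (A : Mat) (Phi : R -> Mat).
Hypothesis HPhi : is_expm n A Phi.

Lemma is_expm_PSeries t i j : (i < n)%nat -> (j < n)%nat ->
  Phi t i j = PSeries (expm_coef n A i j) t.
Proof.
  intros Hi Hj.
  pose proof (PSeries_correct _ t (CV_radius_inside _ _ (expm_coef_radius n A i j t Hi Hj))) as H.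
  apply is_pseries_Reals in H. unfold Pser in H.
  eapply uniqueness_sum; [|exact H].
  replace (fun k => expm_coef n A i j k * t ^ k)
    with (fun k => mpow n A k i j * t ^ k / INR (fact k)); [now apply HPhi|].
  apply functional_extensionality. intros k. unfold expm_coef. field. apply INR_fact_neq_0.
Qed.

Lemma is_expm_0 i j : (i < n)%nat -> (j < n)%nat -> Phi 0 i j = idm i j.
Proof.
  intros Hi Hj. rewrite is_expm_PSeries, PSeries_0 by auto. unfold expm_coef. simpl. field.
Qed.

Lemma is_expm_derive t i j : (i < n)%nat -> (j < n)%nat ->
  is_derive (fun t => Phi t i j) t (rsum n (fun l => A i l * Phi t l j)).
Proof.
  intros Hi Hj.
  pose proof (is_derive_PSeries _ t (expm_coef_radius n A i j t Hi Hj)) as H.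
  apply (is_derive_ext _ _ _ _ (fun s => eq_sym (is_expm_PSeries s i j Hi Hj))) in H.
  eapply is_derive_eq; [|exact H].
  rewrite (PSeries_ext _ (fun k => rsum n (fun l => A i l * expm_coef n A l j k))).
  - apply is_pseries_unique, is_pseries_rsum. intros l Hl. rewrite is_expm_PSeries by auto.
    exact (is_pseries_scal (A i l) (expm_coef n A l j) t _ (Rmult_comm _ _)
             (PSeries_correct _ t (CV_radius_inside _ _ (expm_coef_radius n A l j t Hl Hj)))).
  - intros k. unfold PS_derive, expm_coef. simpl mpow. unfold mmul.
    rewrite (rsum_ext n (fun l => A i l * (mpow n A k l j / INR (fact k)))
               (fun l => A i l * mpow n A k l j * / INR (fact k))) by (intros; unfold Rdiv; ring).
    rewrite rsum_scal_r, fact_simpl, mult_INR.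
    field. split; [apply INR_fact_neq_0|apply not_0_INR; lia].
Qed.

End MatrixExponential.

(** * Cost to go of the scalar modes *)

Lemma quadratic_form_le a1 a2 a3 x y :
  Rabs (a1 * x ^ 2 + a2 * x * y + a3 * y ^ 2) <= (Rabs a1 + Rabs a2 + Rabs a3) * (x ^ 2 + y ^ 2).
Proof.
  assert (Hxy : Rabs (x * y) <= x ^ 2 + y ^ 2).
  { rewrite Rabs_mult. pose proof (pow2_ge_0 (Rabs x - Rabs y)) as Hsq.
    replace ((Rabs x - Rabs y) ^ 2) with (Rabs x ^ 2 + Rabs y ^ 2 - 2 * (Rabs x * Rabs y))
      in Hsq by ring.
    rewrite !pow2_abs in Hsq.
    pose proof (Rmult_le_pos _ _ (Rabs_pos x) (Rabs_pos y)). lra. }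
  pose proof (Rabs_pos a1). pose proof (Rabs_pos a2). pose proof (Rabs_pos a3).
  pose proof (pow2_ge_0 x). pose proof (pow2_ge_0 y).
  eapply Rle_trans; [apply Rabs_triang|]. eapply Rle_trans; [apply Rplus_le_compat_r, Rabs_triang|].
  rewrite (Rmult_assoc a2), !(Rabs_mult a1), !(Rabs_mult a2), !(Rabs_mult a3),
    !(Rabs_right (_ ^ 2)) by (apply Rle_ge, pow2_ge_0).
  assert (Rabs a1 * x ^ 2 <= Rabs a1 * (x ^ 2 + y ^ 2)) by (apply Rmult_le_compat_l; lra).
  assert (Rabs a2 * Rabs (x * y) <= Rabs a2 * (x ^ 2 + y ^ 2)) by (apply Rmult_le_compat_l; lra).
  assert (Rabs a3 * y ^ 2 <= Rabs a3 * (x ^ 2 + y ^ 2)) by (apply Rmult_le_compat_l; lra).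
  lra.
Qed.

(* The quadratic form solving the Lyapunov equation of [d' = w, w' = - k d - b w]
   with running cost [c d^2], i.e. the cost to go [\int_t^oo c d^2]. *)
Definition osc_cost (k b c x y : R) : R :=
  (c * b / k + c / b) / 2 * x ^ 2 + c / k * x * y + c / (2 * b * k) * y ^ 2.

Lemma osc_cost_0 k b x y : osc_cost k b 0 x y = 0.
Proof. unfold osc_cost, Rdiv. ring. Qed.

Section DampedOscillator.
Variables (k b : R) (d w : R -> R).
Hypotheses (Hk : 0 < k) (Hb : 0 < b).
Hypothesis Hd : forall t, is_derive d t (w t).
Hypothesis Hw : forall t, is_derive w t (- k * d t - b * w t).

Lemma is_derive_osc_form a1 a2 a3 t :
  is_derive (fun t => a1 * d t ^ 2 + a2 * d t * w t + a3 * w t ^ 2) t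
    (a1 * (2 * d t * w t) + (a2 * w t * w t + a2 * d t * (- k * d t - b * w t))
     + a3 * (2 * w t * (- k * d t - b * w t))).
Proof.
  apply is_derive_Rplus; [apply is_derive_Rplus|].
  - apply is_derive_scal, is_derive_sqr, Hd.
  - apply (is_derive_Rmult (fun t => a2 * d t) w); [apply is_derive_scal, Hd|apply Hw].
  - apply is_derive_scal, is_derive_sqr, Hw.
Qed.

Lemma osc_cost_derive c t :
  is_derive (fun t => osc_cost k b c (d t) (w t)) t (- c * d t ^ 2).
Proof.
  unfold osc_cost. eapply is_derive_eq; [|apply is_derive_osc_form]. field. lra.
Qed.

Lemma osc_energy_vanishes : vanishes_at_infty (fun t => d t ^ 2 + w t ^ 2).
Proof.
  set (W t := (b + 2 * k / b) * d t ^ 2 + 2 * d t * w t + 2 / b * w t ^ 2).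
  set (dW t := - (2 * k * d t ^ 2 + 2 * w t ^ 2)).
  assert (H2b : 0 < 2 / b) by (apply Rdiv_lt_0_compat; lra).
  assert (H2kb : 0 < 2 * k / b) by (apply Rdiv_lt_0_compat; lra).
  apply (vanishes_at_infty_lyapunov _ W dW (2 * k / (1 + k))
           (2 * k / ((1 + 2 * k) * b)) (b + 2 * k / b + 2 / b + 1)).
  - apply Rdiv_lt_0_compat; lra.
  - apply Rdiv_lt_0_compat; [lra|apply Rmult_lt_0_compat; lra].
  - lra.
  - intros t. pose proof (pow2_ge_0 (d t)). pose proof (pow2_ge_0 (w t)). lra.
  - intros t. unfold W. set (x := d t). set (y := w t).
    pose proof (pow2_ge_0 x). pose proof (pow2_ge_0 y).
    split.
    + assert (Hinv : 0 < / ((1 + 2 * k) * b))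
        by (apply Rinv_0_lt_compat, Rmult_lt_0_compat; lra).
      assert (Hid : (b + 2 * k / b) * x ^ 2 + 2 * x * y + 2 / b * y ^ 2
                    - 2 * k / ((1 + 2 * k) * b) * (x ^ 2 + y ^ 2)
                    = ((1 + 2 * k) * (b * x + y) ^ 2 + y ^ 2 + 4 * k ^ 2 * x ^ 2)
                      * / ((1 + 2 * k) * b)) by (field; lra).
      assert (0 <= ((1 + 2 * k) * (b * x + y) ^ 2 + y ^ 2 + 4 * k ^ 2 * x ^ 2)
                   * / ((1 + 2 * k) * b)).
      { apply Rmult_le_pos; [|lra].
        pose proof (Rmult_le_pos (1 + 2 * k) _ ltac:(lra) (pow2_ge_0 (b * x + y))).
        pose proof (Rmult_le_pos (4 * k ^ 2) _ ltac:(pose proof (pow2_ge_0 k); lra) (pow2_ge_0 x)).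
        lra. }
      lra.
    + assert (Hid : (b + 2 * k / b + 2 / b + 1) * (x ^ 2 + y ^ 2)
                    - ((b + 2 * k / b) * x ^ 2 + 2 * x * y + 2 / b * y ^ 2)
                    = (x - y) ^ 2 + 2 / b * x ^ 2 + (b + 2 * k / b) * y ^ 2) by ring.
      pose proof (pow2_ge_0 (x - y)).
      pose proof (Rmult_le_pos _ _ (Rlt_le _ _ H2b) (pow2_ge_0 x)).
      pose proof (Rmult_le_pos (b + 2 * k / b) _ ltac:(lra) (pow2_ge_0 y)). lra.
  - intros t. unfold W, dW.
    eapply is_derive_eq; [|apply is_derive_osc_form]. field. lra.
  - intros t. unfold dW. set (x := d t). set (y := w t).
    assert (Hid : - (2 * k / (1 + k)) * (x ^ 2 + y ^ 2) + (2 * k * x ^ 2 + 2 * y ^ 2)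
                  = (2 * k ^ 2 * x ^ 2 + 2 * y ^ 2) * / (1 + k)) by (field; lra).
    assert (0 <= (2 * k ^ 2 * x ^ 2 + 2 * y ^ 2) * / (1 + k)).
    { apply Rmult_le_pos; [|left; apply Rinv_0_lt_compat; lra].
      pose proof (pow2_ge_0 x). pose proof (pow2_ge_0 y).
      pose proof (Rmult_le_pos _ _ (pow2_ge_0 k) (pow2_ge_0 x)). lra. }
    lra.
Qed.

Lemma osc_cost_vanishes c : vanishes_at_infty (fun t => osc_cost k b c (d t) (w t)).
Proof.
  set (a1 := (c * b / k + c / b) / 2). set (a2 := c / k). set (a3 := c / (2 * b * k)).
  apply (vanishes_at_infty_dominated (fun t => d t ^ 2 + w t ^ 2) _
           (Rabs a1 + Rabs a2 + Rabs a3)).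
  - pose proof (Rabs_pos a1). pose proof (Rabs_pos a2). pose proof (Rabs_pos a3). lra.
  - intros t _. rewrite (Rabs_right (d t ^ 2 + w t ^ 2))
      by (apply Rle_ge, Rplus_le_le_0_compat; apply pow2_ge_0).
    apply quadratic_form_le.
  - exact osc_energy_vanishes.
Qed.

End DampedOscillator.

Definition exp_cost (mu c x : R) : R := c / (2 * mu) * x ^ 2.

Section ExponentialMode.
Variables (mu : R) (v : R -> R).
Hypothesis Hmu : 0 < mu.
Hypothesis Hv : forall t, is_derive v t (- mu * v t).

Lemma exp_cost_derive c t : is_derive (fun t => exp_cost mu c (v t)) t (- c * v t ^ 2).
Proof.
  unfold exp_cost. eapply is_derive_eq; [|apply is_derive_scal, is_derive_sqr, Hv].
  field. lra.
Qed.

Lemma exp_cost_vanishes c : vanishes_at_infty (fun t => exp_cost mu c (v t)).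
Proof.
  apply (vanishes_at_infty_dominated (fun t => v t ^ 2) _ (Rabs (c / (2 * mu))) (Rabs_pos _)).
  - intros t _. unfold exp_cost.
    rewrite Rabs_mult, (Rabs_right (v t ^ 2)) by (apply Rle_ge, pow2_ge_0). lra.
  - apply (vanishes_at_infty_lyapunov _ (fun t => v t ^ 2) (fun t => - (2 * mu) * v t ^ 2)
             (2 * mu) 1 1); try lra.
    + intros; apply pow2_ge_0.
    + intros; lra.
    + intros t. eapply is_derive_eq; [|apply is_derive_sqr, Hv]. ring.
    + intros; lra.
Qed.

End ExponentialMode.

Lemma block_div N q r : (r < N)%nat -> ((q * N + r) / N)%nat = q.
Proof. intros H. symmetry. apply (Nat.div_unique _ _ _ r); lia. Qed.

Lemma block_mod N q r : (r < N)%nat -> ((q * N + r) mod N)%nat = r.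
Proof. intros H. symmetry. apply (Nat.mod_unique _ _ q); lia. Qed.

Lemma rsum_blocks2 N f g0 g1 :
  (forall m, (m < N)%nat -> f (0 * N + m)%nat = g0 m) ->
  (forall m, (m < N)%nat -> f (1 * N + m)%nat = g1 m) ->
  rsum (2 * N) f = rsum N g0 + rsum N g1.
Proof.
  intros H0 H1. replace (2 * N)%nat with (N + N)%nat by lia.
  rewrite rsum_split. f_equal; apply rsum_ext; intros m Hm.
  - now rewrite <- H0.
  - rewrite <- H1 by assumption. f_equal. lia.
Qed.

Lemma rsum_blocks3 N f g0 g1 g2 :
  (forall m, (m < N)%nat -> f (0 * N + m)%nat = g0 m) ->
  (forall m, (m < N)%nat -> f (1 * N + m)%nat = g1 m) ->
  (forall m, (m < N)%nat -> f (2 * N + m)%nat = g2 m) ->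
  rsum (3 * N) f = rsum N g0 + rsum N g1 + rsum N g2.
Proof.
  intros H0 H1 H2. replace (3 * N)%nat with (2 * N + N)%nat by lia.
  rewrite rsum_split, (rsum_blocks2 N f g0 g1 H0 H1). f_equal.
  apply rsum_ext. intros m Hm. now rewrite <- H2.
Qed.

Ltac block_entry :=
  cbv beta; unfold sysA, sysB, sysC; cbv zeta;
  rewrite ?block_div, ?block_mod by assumption; cbv iota beta.

Section Blocks.
Variables (N : nat) (L S : Mat) (kP tauP kQ tauQ cQ alpha : R).
Local Notation A := (sysA N L kP tauP kQ tauQ cQ).
Local Notation C := (sysC N S alpha).

Lemma sysA_mul_block0 l (Z : nat -> R) : (l < N)%nat ->
  rsum (3 * N) (fun m => A (0 * N + l)%nat m * Z m) = Z (1 * N + l)%nat.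
Proof.
  intros Hl.
  rewrite (rsum_blocks3 N _ (fun _ => 0) (fun m => idm l m * Z (1 * N + m)%nat) (fun _ => 0))
    by (intros; block_entry; ring).
  rewrite !rsum_0, rsum_idm_l by assumption. ring.
Qed.

Lemma sysA_mul_block1 l (Z : nat -> R) : (l < N)%nat ->
  rsum (3 * N) (fun m => A (1 * N + l)%nat m * Z m) =
  - (kP / tauP) * rsum N (fun m => L l m * Z (0 * N + m)%nat) - (1 / tauP) * Z (1 * N + l)%nat.
Proof.
  intros Hl.
  rewrite (rsum_blocks3 N _ (fun m => - (kP / tauP) * (L l m * Z (0 * N + m)%nat))
             (fun m => idm l m * (- (1 / tauP) * Z (1 * N + m)%nat)) (fun _ => 0))
    by (intros; block_entry; ring).
  rewrite rsum_scal_l, rsum_idm_l, rsum_0 by assumption. ring.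
Qed.

Lemma sysA_mul_block2 l (Z : nat -> R) : (l < N)%nat ->
  rsum (3 * N) (fun m => A (2 * N + l)%nat m * Z m) =
  - (cQ / tauQ) * Z (2 * N + l)%nat - (kQ / tauQ) * rsum N (fun m => L l m * Z (2 * N + m)%nat).
Proof.
  intros Hl.
  rewrite (rsum_blocks3 N _ (fun _ => 0) (fun _ => 0)
             (fun m => idm l m * (- (cQ / tauQ) * Z (2 * N + m)%nat)
                       + - (kQ / tauQ) * (L l m * Z (2 * N + m)%nat)))
    by (intros; block_entry; ring).
  rewrite rsum_plus, rsum_scal_l, rsum_idm_l, !rsum_0 by assumption. ring.
Qed.

Lemma sysC_mul_block0 i (Y : nat -> R) : (i < N)%nat ->
  rsum (3 * N) (fun k => C (0 * N + i)%nat k * Y k) =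
  sqrt alpha * rsum N (fun l => S i l * Y (0 * N + l)%nat).
Proof.
  intros Hi.
  rewrite (rsum_blocks3 N _ (fun l => sqrt alpha * (S i l * Y (0 * N + l)%nat)) (fun _ => 0)
             (fun _ => 0)) by (intros; block_entry; ring).
  rewrite rsum_scal_l, !rsum_0. ring.
Qed.

Lemma sysC_mul_block1 i (Y : nat -> R) : (i < N)%nat ->
  rsum (3 * N) (fun k => C (1 * N + i)%nat k * Y k) =
  sqrt alpha * rsum N (fun l => S i l * Y (2 * N + l)%nat).
Proof.
  intros Hi.
  rewrite (rsum_blocks3 N _ (fun _ => 0) (fun _ => 0)
             (fun l => sqrt alpha * (S i l * Y (2 * N + l)%nat))) by (intros; block_entry; ring).
  rewrite rsum_scal_l, !rsum_0. ring.
Qed.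

End Blocks.

(** * Spectral calculus for the Laplacian *)

Section Spectral.
Variables (N : nat) (L U S : Mat) (lam : nat -> R).
Hypothesis HLsym : forall i j, (i < N)%nat -> (j < N)%nat -> L i j = L j i.
Hypothesis HUcols : forall i j, (i < N)%nat -> (j < N)%nat ->
  rsum N (fun k => U k i * U k j) = idm i j.
Hypothesis HUeig : forall i n, (i < N)%nat -> (n < N)%nat ->
  rsum N (fun k => L i k * U k n) = lam n * U i n.
Hypothesis HSsym : forall i j, (i < N)%nat -> (j < N)%nat -> S i j = S j i.
Hypothesis HSS : forall i j, (i < N)%nat -> (j < N)%nat -> mmul N S S i j = L i j.

Lemma spectral_decomposition l m : (l < N)%nat -> (m < N)%nat ->
  L l m = rsum N (fun n => lam n * U l n * U m n).
Proof.
  intros Hl Hm.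
  rewrite (rsum_ext N _ (fun n => rsum N (fun k => L l k * U k n * U m n)))
    by (intros n Hn; rewrite rsum_scal_r, HUeig by assumption; reflexivity).
  rewrite rsum_comm, (rsum_ext N _ (fun k => L l k * idm k m)).
  - now rewrite rsum_idm_r.
  - intros k Hk. rewrite <- (orthonormal_cols_rows N U HUcols k m) by assumption.
    rewrite <- rsum_scal_l. apply rsum_ext. intros; ring.
Qed.

Lemma psd_sqrt_energy (y : nat -> R) :
  rsum N (fun i => rsum N (fun l => S i l * y l) ^ 2) =
  rsum N (fun n => lam n * rsum N (fun l => U l n * y l) ^ 2).
Proof.
  transitivity (rsum N (fun l => rsum N (fun m => y l * y m * L l m))).
  - rewrite (rsum_ext N _
               (fun i => rsum N (fun l => rsum N (fun m => S i l * y l * (S i m * y m)))))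
      by (intros; apply rsum_sqr).
    rewrite rsum_comm. apply rsum_ext. intros l Hl.
    rewrite rsum_comm. apply rsum_ext. intros m Hm.
    rewrite <- HSS by assumption. unfold mmul. rewrite <- rsum_scal_l.
    apply rsum_ext. intros i Hi. rewrite (HSsym l i) by assumption. ring.
  - rewrite (rsum_ext N (fun n => lam n * rsum N (fun l => U l n * y l) ^ 2)
       (fun n => rsum N (fun l => rsum N (fun m => lam n * (U l n * y l * (U m n * y m))))))
      by (intros; rewrite rsum_sqr, <- rsum_scal_l; apply rsum_ext; intros;
          apply eq_sym, rsum_scal_l).
    symmetry. rewrite rsum_comm. apply rsum_ext. intros l Hl.
    rewrite rsum_comm. apply rsum_ext. intros m Hm.
    rewrite spectral_decomposition, <- rsum_scal_l by assumption. apply rsum_ext; intros; ring.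
Qed.

Lemma eigvec_mul n (z : nat -> R) : (n < N)%nat ->
  rsum N (fun l => U l n * rsum N (fun m => L l m * z m)) = lam n * rsum N (fun m => U m n * z m).
Proof.
  intros Hn.
  rewrite (rsum_ext N _ (fun l => rsum N (fun m => U l n * L l m * z m)))
    by (intros; rewrite <- rsum_scal_l; apply rsum_ext; intros; ring).
  rewrite rsum_comm, <- rsum_scal_l. apply rsum_ext. intros m Hm.
  rewrite rsum_scal_r, (rsum_ext N _ (fun l => L m l * U l n))
    by (intros; rewrite HLsym by assumption; ring).
  rewrite HUeig by assumption. ring.
Qed.

End Spectral.

(** * Modal decomposition of the impulse response *)

Section ImpulseResponse.
Variables (N : nat) (L U S : Mat) (lam : nat -> R) (kP tauP kQ tauQ cQ alpha : R).
Hypothesis HLsym : forall i j, (i < N)%nat -> (j < N)%nat -> L i j = L j i.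
Hypothesis HUcols : forall i j, (i < N)%nat -> (j < N)%nat ->
  rsum N (fun k => U k i * U k j) = idm i j.
Hypothesis HUeig : forall i n, (i < N)%nat -> (n < N)%nat ->
  rsum N (fun k => L i k * U k n) = lam n * U i n.
Hypothesis Hlam0 : lam 0%nat = 0.
Hypothesis Hlam_pos : forall n, (0 < n)%nat -> (n < N)%nat -> 0 < lam n.
Hypothesis HSsym : forall i j, (i < N)%nat -> (j < N)%nat -> S i j = S j i.
Hypothesis HSS : forall i j, (i < N)%nat -> (j < N)%nat -> mmul N S S i j = L i j.
Hypotheses (HkP : 0 < kP) (HtauP : 0 < tauP) (HkQ : 0 < kQ) (HtauQ : 0 < tauQ)
  (HcQ : 0 < cQ) (Halpha : 0 < alpha).

Local Notation A := (sysA N L kP tauP kQ tauQ cQ).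
Local Notation B := (sysB N tauP tauQ).
Local Notation C := (sysC N S alpha).

Variable Phi : R -> Mat.
Hypothesis HPhi : is_expm (3 * N) A Phi.

Definition impulse t k j := mmul (3 * N) (Phi t) B k j.
Definition modal_delta t n j := rsum N (fun l => U l n * impulse t (0 * N + l)%nat j).
Definition modal_omega t n j := rsum N (fun l => U l n * impulse t (1 * N + l)%nat j).
Definition modal_V t n j := rsum N (fun l => U l n * impulse t (2 * N + l)%nat j).

Definition mode_stiffness n := kP / tauP * lam n.
Definition mode_rate n := (cQ + kQ * lam n) / tauQ.

Lemma mode_stiffness_pos n : (0 < n)%nat -> (n < N)%nat -> 0 < mode_stiffness n.
Proof.
  intros Hn HnN. unfold mode_stiffness. pose proof (Hlam_pos n Hn HnN).
  apply Rmult_lt_0_compat; [apply Rdiv_lt_0_compat|]; lra.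
Qed.

Lemma mode_rate_pos n : (n < N)%nat -> 0 < mode_rate n.
Proof.
  intros Hn. unfold mode_rate.
  assert (0 <= lam n) by (destruct n; [lra|left; apply Hlam_pos; lia]).
  apply Rdiv_lt_0_compat; [|lra]. pose proof (Rmult_le_pos kQ (lam n)). lra.
Qed.

Lemma impulse_derive t k j : (k < 3 * N)%nat ->
  is_derive (fun t => impulse t k j) t (rsum (3 * N) (fun m => A k m * impulse t m j)).
Proof.
  intros Hk. unfold impulse.
  apply (is_derive_eq _ _ (mmul (3 * N) (mmul (3 * N) A (Phi t)) B k j)); [apply mmul_assoc|].
  unfold mmul at 1. apply is_derive_rsum. intros m Hm.
  apply (is_derive_ext (fun t => B m j * Phi t k m)); [intros; apply Rmult_comm|].
  eapply is_derive_eq; [|apply is_derive_scal, (is_expm_derive _ _ _ HPhi t k m Hk Hm)].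
  apply Rmult_comm.
Qed.

Lemma impulse_0 k j : (k < 3 * N)%nat -> impulse 0 k j = B k j.
Proof.
  intros Hk. unfold impulse, mmul.
  rewrite (rsum_ext _ (fun m => Phi 0 k m * B m j) (fun m => idm k m * B m j))
    by (intros; now rewrite (is_expm_0 _ _ _ HPhi)).
  exact (rsum_idm_l _ _ (fun m => B m j) Hk).
Qed.

Lemma modal_delta_derive t n j : is_derive (fun t => modal_delta t n j) t (modal_omega t n j).
Proof.
  unfold modal_delta.
  eapply is_derive_eq;
    [|apply is_derive_rsum; intros l Hl; apply is_derive_scal, impulse_derive; lia].
  apply rsum_ext. intros l Hl. now rewrite sysA_mul_block0.
Qed.

Lemma modal_omega_derive t n j : (n < N)%nat ->
  is_derive (fun t => modal_omega t n j) t
    (- mode_stiffness n * modal_delta t n j - 1 / tauP * modal_omega t n j).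
Proof.
  intros Hn. unfold modal_omega at 1.
  eapply is_derive_eq;
    [|apply is_derive_rsum; intros l Hl; apply is_derive_scal, impulse_derive; lia].
  rewrite (rsum_ext N _ (fun l =>
             - (kP / tauP) * (U l n * rsum N (fun m => L l m * impulse t (0 * N + m)%nat j))
             + - (1 / tauP) * (U l n * impulse t (1 * N + l)%nat j))).
  2:{ intros l Hl.
      rewrite (sysA_mul_block1 N L kP tauP kQ tauQ cQ l (fun m => impulse t m j)) by assumption.
      ring. }
  rewrite rsum_plus, !rsum_scal_l, (eigvec_mul N L U lam) by assumption.
  unfold modal_delta, modal_omega, mode_stiffness. ring.
Qed.

Lemma modal_V_derive t n j : (n < N)%nat ->
  is_derive (fun t => modal_V t n j) t (- mode_rate n * modal_V t n j).
Proof.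
  intros Hn. unfold modal_V at 1.
  eapply is_derive_eq;
    [|apply is_derive_rsum; intros l Hl; apply is_derive_scal, impulse_derive; lia].
  rewrite (rsum_ext N _ (fun l =>
             - (cQ / tauQ) * (U l n * impulse t (2 * N + l)%nat j)
             + - (kQ / tauQ) * (U l n * rsum N (fun m => L l m * impulse t (2 * N + m)%nat j)))).
  2:{ intros l Hl.
      rewrite (sysA_mul_block2 N L kP tauP kQ tauQ cQ l (fun m => impulse t m j)) by assumption.
      ring. }
  rewrite rsum_plus, !rsum_scal_l, (eigvec_mul N L U lam) by assumption.
  unfold modal_V, mode_rate. field. lra.
Qed.

Lemma modal_init_P n j : (j < N)%nat ->
  modal_delta 0 n (0 * N + j)%nat = 0 /\ modal_omega 0 n (0 * N + j)%nat = U j n / tauP /\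
  modal_V 0 n (0 * N + j)%nat = 0.
Proof.
  intros Hj. unfold modal_delta, modal_omega, modal_V.
  rewrite !(rsum_ext N (fun l => U l n * impulse 0 _ _) (fun l => U l n * B _ _))
    by (intros; rewrite impulse_0 by lia; reflexivity).
  repeat split.
  - apply rsum_eq0. intros l Hl. block_entry. ring.
  - rewrite <- (rsum_idm_r N j (fun l => U l n / tauP)) by assumption.
    apply rsum_ext. intros l Hl. block_entry. field. lra.
  - apply rsum_eq0. intros l Hl. block_entry. ring.
Qed.

Lemma modal_init_Q n j : (j < N)%nat ->
  modal_delta 0 n (1 * N + j)%nat = 0 /\ modal_omega 0 n (1 * N + j)%nat = 0 /\
  modal_V 0 n (1 * N + j)%nat = U j n / tauQ.
Proof.
  intros Hj. unfold modal_delta, modal_omega, modal_V.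
  rewrite !(rsum_ext N (fun l => U l n * impulse 0 _ _) (fun l => U l n * B _ _))
    by (intros; rewrite impulse_0 by lia; reflexivity).
  repeat split.
  - apply rsum_eq0. intros l Hl. block_entry. ring.
  - apply rsum_eq0. intros l Hl. block_entry. ring.
  - rewrite <- (rsum_idm_r N j (fun l => U l n / tauQ)) by assumption.
    apply rsum_ext. intros l Hl. block_entry. field. lra.
Qed.

Definition modal_energy t :=
  rsum (2 * N) (fun j => rsum N (fun n =>
    alpha * lam n * (modal_delta t n j ^ 2 + modal_V t n j ^ 2))).

Lemma output_energy_modal t :
  rsum (2 * N) (fun i => rsum (2 * N) (fun j => mmul (3 * N) (mmul (3 * N) C (Phi t)) B i j ^ 2))
  = modal_energy t.
Proof.
  rewrite (rsum_ext (2 * N) _ (fun i => rsum (2 * N) (fun j =>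
             rsum (3 * N) (fun k => C i k * impulse t k j) ^ 2)))
    by (intros; apply rsum_ext; intros; now rewrite mmul_assoc).
  rewrite rsum_comm. apply rsum_ext. intros j Hj.
  rewrite (rsum_blocks2 N _
             (fun i => alpha * rsum N (fun l => S i l * impulse t (0 * N + l)%nat j) ^ 2)
             (fun i => alpha * rsum N (fun l => S i l * impulse t (2 * N + l)%nat j) ^ 2)).
  2, 3: intros i Hi; cbv beta;
    rewrite ?(sysC_mul_block0 N S alpha i (fun k => impulse t k j)),
      ?(sysC_mul_block1 N S alpha i (fun k => impulse t k j)) by assumption;
    rewrite Rpow_mult_distr, pow2_sqrt by lra; reflexivity.
  rewrite !rsum_scal_l, !(psd_sqrt_energy N L U S lam) by assumption.
  rewrite <- !rsum_scal_l, <- rsum_plus. apply rsum_ext. intros n Hn.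
  unfold modal_delta, modal_V. ring.
Qed.

Definition cost_to_go t :=
  rsum (2 * N) (fun j => rsum N (fun n =>
    osc_cost (mode_stiffness n) (1 / tauP) (alpha * lam n) (modal_delta t n j) (modal_omega t n j)
    + exp_cost (mode_rate n) (alpha * lam n) (modal_V t n j))).

Lemma mode_osc_cost_derive t n j : (n < N)%nat ->
  is_derive (fun t => osc_cost (mode_stiffness n) (1 / tauP) (alpha * lam n)
                        (modal_delta t n j) (modal_omega t n j))
    t (- (alpha * lam n) * modal_delta t n j ^ 2).
Proof.
  intros Hn. destruct (Nat.eq_dec n 0) as [->|Hn0].
  - rewrite Hlam0, Rmult_0_r.
    apply (is_derive_ext (fun _ => 0)); [intros; now rewrite osc_cost_0|].
    eapply is_derive_eq; [|apply is_derive_Rconst]. ring.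
  - apply osc_cost_derive.
    + apply mode_stiffness_pos; lia.
    + apply Rdiv_lt_0_compat; lra.
    + intros; apply modal_delta_derive.
    + intros; now apply modal_omega_derive.
Qed.

Lemma cost_to_go_derive t : is_derive cost_to_go t (- modal_energy t).
Proof.
  unfold cost_to_go, modal_energy. rewrite <- rsum_opp.
  eapply is_derive_eq; [|apply is_derive_rsum; intros j Hj; apply is_derive_rsum; intros n Hn;
    apply is_derive_Rplus; [now apply mode_osc_cost_derive|]].
  2: apply exp_cost_derive; [now apply mode_rate_pos|intros; now apply modal_V_derive].
  apply rsum_ext. intros j Hj. rewrite <- rsum_opp. apply rsum_ext. intros n Hn. ring.
Qed.

Lemma modal_energy_continuous t : continuous modal_energy t.
Proof.
  eapply (is_derive_continuous_R modal_energy t). unfold modal_energy.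
  apply is_derive_rsum. intros j Hj. apply is_derive_rsum. intros n Hn.
  apply is_derive_scal, is_derive_Rplus; apply is_derive_sqr;
    [apply modal_delta_derive|now apply modal_V_derive].
Qed.

Lemma cost_to_go_vanishes : vanishes_at_infty cost_to_go.
Proof.
  apply vanishes_at_infty_rsum. intros j Hj. apply vanishes_at_infty_rsum. intros n Hn.
  apply (vanishes_at_infty_plus
           (fun t => osc_cost (mode_stiffness n) (1 / tauP) (alpha * lam n)
                       (modal_delta t n j) (modal_omega t n j))
           (fun t => exp_cost (mode_rate n) (alpha * lam n) (modal_V t n j))).
  - destruct (Nat.eq_dec n 0) as [->|Hn0].
    + rewrite Hlam0, Rmult_0_r. intros eps Heps. exists 0. intros T _.
      rewrite osc_cost_0, Rabs_R0. lra.
    + apply osc_cost_vanishes.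
      * apply mode_stiffness_pos; lia.
      * apply Rdiv_lt_0_compat; lra.
      * intros; apply modal_delta_derive.
      * intros; now apply modal_omega_derive.
  - apply exp_cost_vanishes; [now apply mode_rate_pos|intros; now apply modal_V_derive].
Qed.

Lemma rsum_column_weights (c : nat -> R) :
  rsum N (fun j => rsum N (fun n => c n * U j n ^ 2)) = rsum N c.
Proof.
  rewrite rsum_comm. apply rsum_ext. intros n Hn. rewrite rsum_scal_l.
  rewrite (rsum_ext N _ (fun k => U k n * U k n)) by (intros; ring).
  rewrite HUcols by assumption. unfold idm. rewrite Nat.eqb_refl. ring.
Qed.

Lemma cost_to_go_0 :
  cost_to_go 0 = alpha / (2 * kP) * INR (N - 1)
    + alpha / (2 * tauQ) * rsum N (fun n => if Nat.eqb n 0 then 0 else 1 / (cQ / lam n + kQ)).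
Proof.
  unfold cost_to_go.
  rewrite (rsum_blocks2 N _
    (fun j => rsum N (fun n => (if Nat.eqb n 0 then 0 else alpha / (2 * kP)) * U j n ^ 2))
    (fun j => rsum N (fun n => alpha / (2 * tauQ) *
       (if Nat.eqb n 0 then 0 else 1 / (cQ / lam n + kQ)) * U j n ^ 2))).
  2, 3: intros j Hj; apply rsum_ext; intros n Hn;
    first [destruct (modal_init_P n j Hj) as (-> & -> & ->)
          |destruct (modal_init_Q n j Hj) as (-> & -> & ->)];
    unfold osc_cost, exp_cost, mode_stiffness, mode_rate;
    destruct (Nat.eq_dec n 0) as [->|Hn0];
    [ rewrite Hlam0; cbn [Nat.eqb]; unfold Rdiv; ring
    | rewrite (proj2 (Nat.eqb_neq n 0) Hn0); pose proof (Hlam_pos n ltac:(lia) Hn) as Hl;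
      pose proof (Rmult_lt_0_compat kQ (lam n) HkQ Hl); field; repeat split; lra ].
  rewrite !rsum_column_weights, rsum_const_skip0, rsum_scal_l. ring.
Qed.

Lemma impulse_response_H2 :
  improper_int0
    (fun t => rsum (2 * N) (fun i => rsum (2 * N) (fun j =>
                mmul (3 * N) (mmul (3 * N) C (Phi t)) B i j ^ 2)))
    (alpha / (2 * kP) * INR (N - 1)
     + alpha / (2 * tauQ) * rsum N (fun n => if Nat.eqb n 0 then 0 else 1 / (cQ / lam n + kQ))).
Proof.
  rewrite <- cost_to_go_0.
  rewrite (functional_extensionality _ modal_energy output_energy_modal).
  apply improper_int0_primitive.
  - apply cost_to_go_derive.
  - apply modal_energy_continuous.
  - apply cost_to_go_vanishes.
Qed.

End ImpulseResponse.

Lemma laplacian_sym N (w : Mat) :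
  (forall i j, (i < N)%nat -> (j < N)%nat -> w i j = w j i) ->
  forall i j, (i < N)%nat -> (j < N)%nat -> laplacian N w i j = laplacian N w j i.
Proof.
  intros Hw i j Hi Hj. unfold laplacian. rewrite Nat.eqb_sym.
  destruct (Nat.eqb_spec j i) as [->|_]; [reflexivity|]. now rewrite Hw.
Qed.

Lemma sorted_spectrum_pos N (lam : nat -> R) :
  (forall n, (n + 1 < N)%nat -> lam n <= lam (n + 1)%nat) -> ((2 <= N)%nat -> 0 < lam 1%nat) ->
  forall n, (0 < n)%nat -> (n < N)%nat -> 0 < lam n.
Proof.
  intros Hsorted H1 n Hn HnN. induction n as [|[|n] IH]; [lia|now apply H1; lia|].
  pose proof (Hsorted (S n) ltac:(lia)) as Hs. rewrite Nat.add_1_r in Hs.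
  specialize (IH ltac:(lia) ltac:(lia)). lra.
Qed.

Theorem theorem2
  (N : nat) (w : Mat) (U : Mat) (lam : nat -> R) (S : Mat)
  (kP tauP kQ tauQ bbar alpha : R)
  (HN : (1 <= N)%nat)
  (Hw_sym : forall i j, (i < N)%nat -> (j < N)%nat -> w i j = w j i)
  (Hw_nonneg : forall i j, (i < N)%nat -> (j < N)%nat -> 0 <= w i j)
  (Hconn : connected N w)
  (Heig : eigen_decomp N (laplacian N w) U lam)
  (Hlam0 : lam 0%nat = 0)
  (Hlam1 : (2 <= N)%nat -> 0 < lam 1%nat)
  (Hlam_sorted : forall n, (n + 1 < N)%nat -> lam n <= lam (n + 1)%nat)
  (HS : is_psd_sqrt N (laplacian N w) S)
  (HkP : 0 < kP) (HtauP : 0 < tauP) (HkQ : 0 < kQ) (HtauQ : 0 < tauQ)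
  (Hbbar : 0 <= bbar) (Halpha : 0 < alpha) :
  let cQ := 1 + 2 * kQ * bbar in
  H2_norm_sq (3 * N) (2 * N) (2 * N)
    (sysA N (laplacian N w) kP tauP kQ tauQ cQ)
    (sysB N tauP tauQ)
    (sysC N S alpha)
    (alpha / (2 * kP) * INR (N - 1)
     + alpha / (2 * tauQ)
       * rsum N (fun n => if Nat.eqb n 0 then 0 else 1 / (cQ / lam n + kQ))).
Proof.
  intros cQ Phi HPhi.
  destruct Heig as [HUcols HUeig]. destruct HS as [HSsym [_ HSS]].
  assert (HcQ : 0 < cQ) by (unfold cQ; pose proof (Rmult_le_pos _ _ (Rlt_le _ _ HkQ) Hbbar); lra).
  (* Connectivity and the sign of the weights enter only through [Hlam1]. *)
  apply (impulse_response_H2 N (laplacian N w) U S lam); auto.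
  - now apply laplacian_sym.
  - now apply sorted_spectrum_pos.
Qed.
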